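(* For any $m,n\in\mathbb N$ there exists a constant $c>0$ such that $|\mathbb P^T_m(x)-\mathbb P^T_n(x)|\le c$ for all real $x\ge1$. Consequently $\mathbb P^T_m(x)\sim\mathbb P^T_n(x)$ as $x\to+\infty$ for arbitrary $m,n\in\mathbb N$.
   Context: Let $p_n$ denote the $n$-th prime number. Define $p^{(0)}_n=n$ and recursively $p^{(k+1)}_n=p_{p^{(k)}_n}$ for $k\in\mathbb N_0$. Let $\mathbb P^T_n=\{p^{(k)}_n:k\in\mathbb N\}$ and, for $A\subset\mathbb N$ and $x\ge1$, $A(x)=\#\{a\le x: a\in A\}$. $f\sim g$ means $f/g\to1$. *)

From Stdlib Require Import Reals.
From Coquelicot Require Import Coquelicot.
From mathcomp Require Import all_boot.

Set Implicit Arguments.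
Unset Strict Implicit.
Unset Printing Implicit Defensive.
Local Open Scope nat_scope.

Lemma exists_prime_above (m : nat) : exists p : nat, prime p && (m < p).
Proof. by have [p pp mp] := prime_above m; exists p; rewrite pp mp. Qed.

Definition nextprime (m : nat) : nat := ex_minn (exists_prime_above m).

Fixpoint primeseq (k : nat) : nat :=
  match k with
  | 0 => 2
  | k'.+1 => nextprime (primeseq k')
  end.

(* p_n = the n-th prime, 1-indexed (p_1 = 2).  p_0 is not used by the paper;
   here it is set to 2 by convention and never occurs below (n >= 1). *)
Definition nth_prime (n : nat) : nat := primeseq n.-1.

Definition iter_prime (k n : nat) : nat := ssrnat.iter k nth_prime n.

(* membership a \in P^T_n = { p^{(k)}_n : k >= 1 }.  The search over k is
   bounded by a, which is harmless since p^{(k)}_n >= k for all k. *)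
Definition in_PT (n a : nat) : bool :=
  [exists k : 'I_a.+1, (0 < val k) && (iter_prime k n == a)].

Definition PT_count_nat (n N : nat) : nat := count (in_PT n) (iota 1 N).

(* P^T_n(x) for real x >= 1: the a <= x are exactly the a <= floor x *)
Definition PT_count (n : nat) (x : R) : nat := PT_count_nat n (Z.to_nat (Int_part x)).

(* Only two properties of [a |-> p_a] matter: it is nondecreasing and
   [a < p_a].  Write [P^T_n(x)] as the number of [k >= 1] with
   [p^(k)_n <= x]; this count is [>= K] exactly when [p^(K)_n <= x].  For
   [K > n] we have [p^(K)_m = p^(K-n)_(p^(n)_m) >= p^(K-n)_n] because
   [p^(n)_m >= n], so [P^T_m(x) <= n + P^T_n(x)], and symmetrically.  The
   counts tend to infinity, so a bounded difference forces ratio 1. *)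

From Stdlib Require Import Reals Lra Lia.
From Coquelicot Require Import Coquelicot.
From mathcomp Require Import all_boot zify.

Set Implicit Arguments.
Unset Strict Implicit.

Section InflatingIteration.
Local Open Scope nat_scope.

Variable f : nat -> nat.
Hypothesis f_homo : {homo f : a b / a <= b}.
Hypothesis f_gt : forall a, a < f a.

Lemma iter_homo k : {homo iter k f : a b / a <= b}.
Proof. by elim: k => //= k IH a b /IH /f_homo. Qed.

Lemma iter_ltn_steps n : {homo (fun k => iter k f n) : i j / i < j}.
Proof. by apply: homo_ltn => [|k]; [exact: ltn_trans | exact: f_gt]. Qed.

Lemma iter_leq_steps n : {homo (fun k => iter k f n) : i j / i <= j}.
Proof. by apply: homo_leq => [||k]; [exact: leqnn | exact: leq_trans | exact: ltnW (f_gt _)]. Qed.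

Lemma iter_inj_steps n : injective (fun k => iter k f n).
Proof. exact/incn_inj/leq_mono/iter_ltn_steps. Qed.

Lemma steps_leq_iter k n : k <= iter k f n.
Proof. by elim: k => //= k IH; exact: leq_ltn_trans IH (f_gt _). Qed.

Definition orbit_count (n N : nat) : nat :=
  count (fun k => iter k f n <= N) (iota 1 N).

Lemma iota1_split N K : K <= N -> iota 1 N = iota 1 K ++ iota K.+1 (N - K).
Proof. by move=> le_KN; rewrite -{1}(subnKC le_KN) iotaD add1n. Qed.

Lemma orbit_count_ge n N K : iter K f n <= N -> K <= orbit_count n N.
Proof.
move=> le_iter_N; have le_KN := leq_trans (steps_leq_iter K n) le_iter_N.
rewrite /orbit_count (iota1_split le_KN) count_cat.
apply: leq_trans (leq_addr _ _).
rewrite (@eq_in_count _ _ predT) ?count_predT ?size_iota // => k.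
rewrite mem_iota add1n ltnS => /andP[_ le_k_K] /=.
exact: leq_trans (iter_leq_steps n le_k_K) le_iter_N.
Qed.

Lemma orbit_count_le n N K : N < iter K.+1 f n -> orbit_count n N <= K.
Proof.
move=> lt_N_iter; rewrite /orbit_count.
have [le_NK | lt_KN] := leqP N K.
  by apply: leq_trans (count_size _ _) _; rewrite size_iota.
have tail_none : {in iota K.+1 (N - K), (fun k => iter k f n <= N) =1 pred0}.
  move=> k; rewrite mem_iota => /andP[le_K1_k _] /=.
  by apply/negbTE; rewrite -ltnNge; exact: leq_trans lt_N_iter (iter_leq_steps n le_K1_k).
rewrite (iota1_split (ltnW lt_KN)) count_cat (eq_in_count tail_none) count_pred0 addn0.
by apply: leq_trans (count_size _ _) _; rewrite size_iota.
Qed.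

Lemma orbit_countP n N K : 0 < K -> (K <= orbit_count n N) = (iter K f n <= N).
Proof.
case: K => // K _; apply/idP/idP; last exact: orbit_count_ge.
by apply: contraLR; rewrite -!ltnNge => /orbit_count_le; rewrite ltnS.
Qed.

Lemma orbit_count_shift m n N : orbit_count m N <= n + orbit_count n N.
Proof.
set K := orbit_count m N.
have [le_Kn | lt_nK] := leqP K n; first exact: leq_trans le_Kn (leq_addr _ _).
have : iter K f m <= N by rewrite -orbit_countP // (leq_ltn_trans _ lt_nK).
rewrite -(subnK (ltnW lt_nK)) iterD => le_iter_N.
have : K - n <= orbit_count n N.
  rewrite orbit_countP ?subn_gt0 //; apply: leq_trans le_iter_N.
  exact/iter_homo/steps_leq_iter.
lia.
Qed.

End InflatingIteration.

Section NthPrime.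
Local Open Scope nat_scope.

Lemma nextprime_gt m : m < nextprime m.
Proof. by rewrite /nextprime; case: ex_minnP => p /andP[_ ?] _. Qed.

Lemma nth_prime_gt n : n < nth_prime n.
Proof.
suff primeseq_ge k : k.+2 <= primeseq k by rewrite /nth_prime; have := primeseq_ge n.-1; lia.
by elim: k => //= k IH; exact: leq_ltn_trans IH (nextprime_gt _).
Qed.

Lemma nth_prime_homo : {homo nth_prime : a b / a <= b}.
Proof.
have primeseq_homo : {homo primeseq : a b / a <= b}.
  by apply: homo_leq => [||k]; [exact: leqnn | exact: leq_trans | exact: ltnW (nextprime_gt _)].
by move=> a b le_ab; apply: primeseq_homo; lia.
Qed.

Lemma in_PTP n a : reflect (exists2 k, 0 < k & iter_prime k n = a) (in_PT n a).
Proof.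
apply: (iffP existsP) => [[k /andP[k_gt0 /eqP <-]] | [k k_gt0 <-]]; first by exists k.
have lt_k : k < (iter_prime k n).+1 by rewrite ltnS; exact: steps_leq_iter nth_prime_gt _ _.
by exists (Ordinal lt_k); rewrite /= k_gt0 eqxx.
Qed.

Lemma PT_count_nat_orbit n N : PT_count_nat n N = orbit_count nth_prime n N.
Proof.
rewrite /PT_count_nat /orbit_count -!size_filter.
rewrite -[RHS](size_map (fun k => iter_prime k n)); apply/perm_size/uniq_perm.
- exact: filter_uniq (iota_uniq _ _).
- by rewrite map_inj_uniq ?filter_uniq ?iota_uniq //; exact: iter_inj_steps nth_prime_gt _.
move=> a; rewrite mem_filter mem_iota; apply/andP/mapP.
  case=> /in_PTP[k k_gt0 <-] /andP[_ le_a_N]; exists k => //.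
  have := steps_leq_iter nth_prime_gt k n.
  by rewrite mem_filter mem_iota k_gt0 /=; rewrite /iter_prime in le_a_N *; lia.
case=> k; rewrite mem_filter mem_iota => /andP[le_a_N /andP[k_gt0 _]] ->.
split; first by apply/in_PTP; exists k.
by have := steps_leq_iter nth_prime_gt k n; rewrite /iter_prime in le_a_N *; lia.
Qed.

End NthPrime.

Local Open Scope R_scope.

Lemma to_nat_Int_part_ge (a : nat) (x : R) : INR a <= x -> (a <= Z.to_nat (Int_part x))%nat.
Proof.
move=> le_a_x; have [_ gt_Int_x] := base_Int_part x.
have : IZR (Z.of_nat a - 1) < IZR (Int_part x) by rewrite minus_IZR -INR_IZR_INZ; lra.
by move/lt_IZR => lt_a_Int; apply/leP; lia.
Qed.

Lemma is_lim_div_bounded_diff (u v : R -> R) (c : R) :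
  (forall x, Rabs (u x - v x) <= c) -> is_lim v p_infty p_infty ->
  is_lim (fun x => u x / v x) p_infty 1.
Proof.
move=> bound_uv /is_lim_spec v_lim; apply/is_lim_spec => eps /=.
have eps_gt0 := cond_pos eps.
have c_ge0 : 0 <= c by apply: Rle_trans (bound_uv 0); exact: Rabs_pos.
have [M v_large] := v_lim (c / eps + 1).
exists M => x /v_large v_large_x.
have c_lt : c < eps * v x.
  have : c / eps < v x by lra.
  by move/(Rlt_div_l _ _ _ eps_gt0); lra.
have v_gt0 : 0 < v x by apply: Rle_lt_trans (Rdiv_le_0_compat _ _ c_ge0 eps_gt0) _; lra.
replace (u x / v x - 1) with ((u x - v x) / v x) by (field; lra).
rewrite Rabs_div ?(Rabs_pos_eq (v x)); try lra.
by apply/Rlt_div_l => //; apply: Rle_lt_trans (bound_uv x) _; lra.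
Qed.

Lemma PT_count_dist m n x :
  Rabs (INR (PT_count m x) - INR (PT_count n x)) <= INR (m + n).
Proof.
rewrite /PT_count !PT_count_nat_orbit.
set N := Z.to_nat (Int_part x).
have /leP/le_INR := orbit_count_shift nth_prime_homo nth_prime_gt m n N.
have /leP/le_INR := orbit_count_shift nth_prime_homo nth_prime_gt n m N.
have := pos_INR m; have := pos_INR n.
rewrite !plus_INR => ????; apply: Rabs_le; lra.
Qed.

Lemma is_lim_PT_count n : is_lim (fun x => INR (PT_count n x)) p_infty p_infty.
Proof.
apply/is_lim_spec => M /=; have [K lt_M_K] := INR_unbounded M.
exists (INR (iter_prime K n)) => x /Rlt_le /to_nat_Int_part_ge le_iter_x.
apply: Rlt_le_trans (Rgt_lt _ _ lt_M_K) _; apply/le_INR/leP.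
by rewrite /PT_count PT_count_nat_orbit; exact: (orbit_count_ge nth_prime_gt le_iter_x).
Qed.

Theorem theorem6 :
  forall m n : nat, leq 1 m -> leq 1 n ->
    (exists c : R, Rlt 0 c /\
       forall x : R, Rle 1 x ->
         Rle (Rabs (Rminus (INR (PT_count m x)) (INR (PT_count n x)))) c)
    /\ is_lim (fun x : R => Rdiv (INR (PT_count m x)) (INR (PT_count n x))) p_infty (Rbar.Finite 1).
Proof.
move=> m n m_gt0 _; split.
  exists (INR (m + n)); split; first by apply/lt_0_INR/ltP; lia.
  by move=> x _; exact: PT_count_dist.
exact: is_lim_div_bounded_diff (PT_count_dist m n) (is_lim_PT_count n).
Qed.
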